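(* $\widetilde{\mathbb{K}}_{sm}$ is a Gelfand ring: for all $a,b\in\widetilde{\mathbb{K}}_{sm}$ with $a+b=1$ there exist $r,s\in\widetilde{\mathbb{K}}_{sm}$ such that $(1+ar)(1+bs)=0$.
   Context: Let $I=(0,1]$ and $\mathbb{K}\in\{\mathbb{R},\mathbb{C}\}$. $\mathcal{E}_{M,sm}$ is the set of nets $(r_\varepsilon)_{\varepsilon\in I}\in\mathbb{K}^I$ with $\varepsilon\mapsto r_\varepsilon$ smooth on $I$ and $|r_\varepsilon|=O(\varepsilon^{-N})$ as $\varepsilon\to0$ for some $N\in\mathbb{N}$; $\mathcal{N}_{sm}$ is the set of smooth nets with $|r_\varepsilon|=O(\varepsilon^m)$ for all $m\in\mathbb{N}$; $\widetilde{\mathbb{K}}_{sm}=\mathcal{E}_{M,sm}/\mathcal{N}_{sm}$. *)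

From Stdlib Require Import Reals.
From Coquelicot Require Import Coquelicot.
Open Scope R_scope.

Definition inI (t : R) : Prop := 0 < t <= 1.

(* l is the derivative of g at t in I, relative to I (one-sided at t = 1). *)
Definition is_derive_I {V : NormedModule R_AbsRing} (g : R -> V) (t : R) (l : V) : Prop :=
  filterlim (fun h => scal (/ h) (minus (g (t + h)) (g t)))
    (within (fun h => h <> 0 /\ inI (t + h)) (locally 0)) (locally l).

Definition smooth_I {V : NormedModule R_AbsRing} (r : R -> V) : Prop :=
  exists d : nat -> R -> V,
    (forall t, inI t -> d O t = r t) /\
    (forall n t, inI t -> is_derive_I (d n) t (d (S n) t)).

Definition moderate_sm {V : NormedModule R_AbsRing} (r : R -> V) : Prop :=
  smooth_I r /\
  exists (N : nat) (c eps0 : R), 0 < eps0 /\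
    forall e, 0 < e <= eps0 -> norm (r e) <= c * / (e ^ N).

Definition negligible_sm {V : NormedModule R_AbsRing} (r : R -> V) : Prop :=
  smooth_I r /\
  forall m : nat, exists c eps0 : R, 0 < eps0 /\
    forall e, 0 < e <= eps0 -> norm (r e) <= c * (e ^ m).

(* The Gelfand property of K~_sm = E_{M,sm}/N_{sm}, written on representatives:
   equality in the quotient means the difference of representatives is in N_sm. *)
Definition gelfand_sm {V : NormedModule R_AbsRing}
    (add mul : V -> V -> V) (one : V) : Prop :=
  forall a b : R -> V,
    moderate_sm a -> moderate_sm b ->
    negligible_sm (fun e => minus (add (a e) (b e)) one) ->
    exists r s : R -> V,
      moderate_sm r /\ moderate_sm s /\
      negligible_sm (fun e => mul (add one (mul (a e) (r e)))
                                  (add one (mul (b e) (s e)))).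

(* Given representatives with a + b = 1 up to negligible nets, take
   r := - conj(a) phi(|a|^2/eps) / eps  with the entire function
   phi(z) = (1 - exp(-z)) / z.  Then 1 + a r = exp(-|a|^2/eps) is smooth, and
   r is moderate because 0 <= phi <= 1 on [0, oo).  Hence
   (1 + a r)(1 + b s) = exp(-(|a|^2 + |b|^2)/eps), which is negligible since
   a + b ~ 1 forces |a|^2 + |b|^2 >= 1/8 for small eps.  Smoothness on
   I = (0,1] is checked through n-fold one-sided differentiability, which is
   stable under sums, products, 1/eps and composition with entire functions. *)

From Stdlib Require Import Reals Lra Lia ClassicalEpsilon Arith.Factorial.
From Coquelicot Require Import Coquelicot.
Open Scope R_scope.

Definition within_I (t : R) := within (fun h => h <> 0 /\ inI (t + h)) (locally 0).

#[local] Instance within_I_filter t : Filter (within_I t).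
Proof. apply within_filter, locally_filter. Qed.

Lemma within_I_domain t : within_I t (fun h => h <> 0 /\ inI (t + h)).
Proof. unfold within_I, within. apply filter_forall. tauto. Qed.

Lemma within_I_proper t : inI t -> ProperFilter' (within_I t).
Proof.
  intros [Ht0 Ht1]. constructor; [|apply within_I_filter].
  intros [eps Heps].
  assert (Heps0 := cond_pos eps).
  set (h := - Rmin (eps / 2) (t / 2)).
  assert (Hmin_pos : 0 < Rmin (eps / 2) (t / 2)) by (apply Rmin_pos; lra).
  assert (Hmin_l := Rmin_l (eps / 2) (t / 2)).
  assert (Hmin_r := Rmin_r (eps / 2) (t / 2)).
  apply (Heps h).
  - change (Rabs (h - 0) < eps).
    unfold h. rewrite Rminus_0_r, Rabs_Ropp, Rabs_right; lra.
  - unfold h, inI. lra.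
Qed.

Lemma within_I_id t : filterlim (fun h => h) (within_I t) (locally 0).
Proof. intros P [eps Heps]. exists eps. intros y Hy _. apply Heps, Hy. Qed.

Section RealLimits.
Context {T : Type} {F : (T -> Prop) -> Prop} {FF : Filter F}.

Lemma filterlim_Rplus (u v : T -> R) x y :
  filterlim u F (locally x) -> filterlim v F (locally y) ->
  filterlim (fun h => u h + v h) F (locally (x + y)).
Proof.
  intros Hu Hv. eapply filterlim_comp_2; [exact Hu | exact Hv |].
  apply (@filterlim_plus R_AbsRing R_NormedModule).
Qed.

Lemma filterlim_Rmult (u v : T -> R) x y :
  filterlim u F (locally x) -> filterlim v F (locally y) ->
  filterlim (fun h => u h * v h) F (locally (x * y)).
Proof.
  intros Hu Hv. eapply filterlim_comp_2; [exact Hu | exact Hv |].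
  apply (@filterlim_mult R_AbsRing).
Qed.

End RealLimits.

Lemma is_derive_I_quotient (f : R -> R) t l :
  is_derive_I f t l <->
  filterlim (fun h => (f (t + h) - f t) / h) (within_I t) (locally l).
Proof.
  split; apply filterlim_ext; intros h;
    unfold scal, minus, plus, opp; simpl; unfold mult; simpl; unfold Rdiv; ring.
Qed.

Lemma is_derive_I_by_quotient (f g : R -> R) t l :
  (forall h, h <> 0 -> inI (t + h) -> (f (t + h) - f t) / h = g h) ->
  filterlim g (within_I t) (locally l) -> is_derive_I f t l.
Proof.
  intros Hfg Hg. apply is_derive_I_quotient.
  apply (filterlim_ext_loc g); [|exact Hg].
  eapply filter_imp; [|apply within_I_domain].
  intros h [Hh HtI]. symmetry. apply Hfg; assumption.
Qed.

Lemma is_derive_I_continuous (f : R -> R) t l :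
  is_derive_I f t l -> filterlim (fun h => f (t + h)) (within_I t) (locally (f t)).
Proof.
  intros Hf. apply is_derive_I_quotient in Hf.
  replace (f t) with (f t + 0 * l) by ring.
  apply (filterlim_ext_loc (fun h => f t + h * ((f (t + h) - f t) / h))).
  - eapply filter_imp; [|apply within_I_domain]. intros h [Hh _]. field. exact Hh.
  - apply filterlim_Rplus; [apply filterlim_const |].
    apply filterlim_Rmult; [apply within_I_id | exact Hf].
Qed.

Lemma is_derive_I_const (c : R) t : is_derive_I (fun _ => c) t 0.
Proof.
  apply (is_derive_I_by_quotient _ (fun _ => 0)); [|apply filterlim_const].
  intros h Hh _. field. exact Hh.
Qed.

Lemma is_derive_I_id t : is_derive_I (fun x : R => x) t 1.
Proof.
  apply (is_derive_I_by_quotient _ (fun _ => 1)); [|apply filterlim_const].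
  intros h Hh _. field. exact Hh.
Qed.

Lemma is_derive_I_plus (f g : R -> R) t l1 l2 :
  is_derive_I f t l1 -> is_derive_I g t l2 ->
  is_derive_I (fun x => f x + g x) t (l1 + l2).
Proof.
  intros Hf Hg. apply is_derive_I_quotient in Hf, Hg.
  apply (is_derive_I_by_quotient _ _ _ _ (fun h Hh _ => eq_refl _)).
  apply (filterlim_ext_loc (fun h => (f (t + h) - f t) / h + (g (t + h) - g t) / h)).
  - eapply filter_imp; [|apply within_I_domain]. intros h [Hh _]. field. exact Hh.
  - apply filterlim_Rplus; assumption.
Qed.

Lemma is_derive_I_mult (f g : R -> R) t l1 l2 :
  is_derive_I f t l1 -> is_derive_I g t l2 ->
  is_derive_I (fun x => f x * g x) t (l1 * g t + f t * l2).
Proof.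
  intros Hf Hg. assert (Hg_cont := is_derive_I_continuous _ _ _ Hg).
  apply is_derive_I_quotient in Hf, Hg.
  apply (is_derive_I_by_quotient _
    (fun h => (f (t + h) - f t) / h * g (t + h) + f t * ((g (t + h) - g t) / h))).
  - intros h Hh _. field. exact Hh.
  - apply filterlim_Rplus; apply filterlim_Rmult; try assumption.
    apply filterlim_const.
Qed.

Lemma is_derive_I_ext (f g : R -> R) t l :
  inI t -> (forall x, inI x -> f x = g x) -> is_derive_I f t l -> is_derive_I g t l.
Proof.
  intros Ht Hfg Hf. apply is_derive_I_quotient in Hf.
  apply (is_derive_I_by_quotient _ (fun h => (f (t + h) - f t) / h)); [|exact Hf].
  intros h _ HtI. rewrite !Hfg; auto.
Qed.

Lemma is_derive_I_unique (f : R -> R) t l1 l2 :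
  inI t -> is_derive_I f t l1 -> is_derive_I f t l2 -> l1 = l2.
Proof.
  intros Ht H1 H2. apply is_derive_I_quotient in H1, H2.
  eapply (@filterlim_locally_unique _ R_AbsRing R_NormedModule);
    [apply within_I_proper, Ht | exact H1 | exact H2].
Qed.

Lemma is_derive_I_comp (psi f : R -> R) t l l' :
  is_derive_I f t l -> is_derive psi (f t) l' ->
  is_derive_I (fun x => psi (f x)) t (l' * l).
Proof.
  intros Hf Hpsi. assert (Hf_cont := is_derive_I_continuous _ _ _ Hf).
  apply is_derive_I_quotient in Hf.
  set (y0 := f t) in *.
  (* the difference quotient of [psi] at [y0], patched to [l'] at [y0] itself *)
  set (Q := fun y => if Req_EM_T y y0 then l' else (psi y - psi y0) / (y - y0)).
  assert (HQ : filterlim Q (locally y0) (locally l')).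
  { apply is_derive_Reals in Hpsi. apply filterlim_locally. intros eps.
    destruct (Hpsi eps (cond_pos eps)) as [delta Hdelta].
    exists delta. intros y Hy. change R in y. change (Rabs (y - y0) < delta) in Hy.
    change (Rabs (Q y - l') < eps). unfold Q.
    destruct (Req_EM_T y y0) as [E | E].
    - rewrite Rminus_diag, Rabs_R0. apply cond_pos.
    - specialize (Hdelta (y - y0)). replace (y0 + (y - y0)) with y in Hdelta by ring.
      apply Hdelta; [lra | exact Hy]. }
  apply (is_derive_I_by_quotient _ (fun h => Q (f (t + h)) * ((f (t + h) - f t) / h))).
  - intros h Hh _. unfold Q. fold y0.
    destruct (Req_EM_T (f (t + h)) y0) as [E | E].
    + rewrite E. unfold Rdiv. ring.
    + field. split; [exact Hh | lra].
  - apply filterlim_Rmult; [|exact Hf]. eapply filterlim_comp; [exact Hf_cont | exact HQ].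
Qed.

Fixpoint derivable_I_n (n : nat) (f : R -> R) : Prop :=
  match n with
  | O => True
  | S m => exists f', (forall t, inI t -> is_derive_I f t (f' t)) /\ derivable_I_n m f'
  end.

Lemma derivable_I_n_ext n : forall f g : R -> R,
  (forall x, inI x -> f x = g x) -> derivable_I_n n f -> derivable_I_n n g.
Proof.
  destruct n as [|n]; simpl; auto.
  intros f g Hfg [f' [Hf Hf']]. exists f'. split; auto.
  intros t Ht. eapply is_derive_I_ext; eauto.
Qed.

Lemma derivable_I_n_pred n : forall f, derivable_I_n (S n) f -> derivable_I_n n f.
Proof.
  induction n as [|n IH]; simpl; auto.
  intros f [f' [Hf Hf']]. exists f'. split; auto.
Qed.

Lemma derivable_I_n_const n : forall c : R, derivable_I_n n (fun _ => c).
Proof.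
  induction n as [|n IH]; simpl; auto.
  intros c. exists (fun _ => 0). split; auto. intros; apply is_derive_I_const.
Qed.

Lemma derivable_I_n_plus n : forall f g,
  derivable_I_n n f -> derivable_I_n n g -> derivable_I_n n (fun x => f x + g x).
Proof.
  induction n as [|n IH]; simpl; auto.
  intros f g [f' [Hf Hf']] [g' [Hg Hg']]. exists (fun x => f' x + g' x). split.
  - intros; apply is_derive_I_plus; auto.
  - apply IH; auto.
Qed.

Lemma derivable_I_n_mult n : forall f g,
  derivable_I_n n f -> derivable_I_n n g -> derivable_I_n n (fun x => f x * g x).
Proof.
  induction n as [|n IH]; simpl; auto.
  intros f g Hf0 Hg0.
  assert (Hfn := derivable_I_n_pred n f Hf0). assert (Hgn := derivable_I_n_pred n g Hg0).
  destruct Hf0 as [f' [Hf Hf']]. destruct Hg0 as [g' [Hg Hg']].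
  exists (fun x => f' x * g x + f x * g' x). split.
  - intros; apply is_derive_I_mult; auto.
  - apply derivable_I_n_plus; apply IH; auto.
Qed.

Lemma derivable_I_n_comp n : forall (d : nat -> R -> R) f,
  (forall k x, is_derive (d k) x (d (S k) x)) ->
  derivable_I_n n f -> derivable_I_n n (fun x => d O (f x)).
Proof.
  induction n as [|n IH]; simpl; auto.
  intros d f Hd Hf0. assert (Hfn := derivable_I_n_pred n f Hf0).
  destruct Hf0 as [f' [Hf Hf']].
  exists (fun x => d 1%nat (f x) * f' x). split.
  - intros t Ht. apply is_derive_I_comp; auto.
  - apply derivable_I_n_mult; auto.
    apply (IH (fun k => d (S k))); auto.
Qed.

Lemma derivable_I_n_inv n : derivable_I_n n (fun x => / x).
Proof.
  induction n as [|n IH]; simpl; auto.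
  exists (fun x => -1 * (/ x * / x)). split.
  - intros t [Ht _].
    replace (-1 * (/ t * / t)) with (- 1 / t ^ 2 * 1) by (field; lra).
    apply (is_derive_I_comp Rinv (fun x => x) t 1 _ (is_derive_I_id t)).
    apply (is_derive_inv (fun x => x) t 1); [auto_derive; auto | lra].
  - apply derivable_I_n_mult; [apply derivable_I_n_const | apply derivable_I_n_mult; exact IH].
Qed.

Lemma derivable_I_n_smooth (f : R -> R) n : smooth_I f -> derivable_I_n n f.
Proof.
  intros [d [Hd0 Hd]].
  assert (Hall : forall m k, derivable_I_n m (d k)).
  { induction m as [|m IH]; simpl; auto. intros k. exists (d (S k)). auto. }
  apply (derivable_I_n_ext n (d O)); auto.
Qed.

Lemma derivable_I_derivative (f : R -> R) : (forall n, derivable_I_n n f) ->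
  exists f', (forall t, inI t -> is_derive_I f t (f' t)) /\ forall n, derivable_I_n n f'.
Proof.
  intros Hf. destruct (Hf 1%nat) as [f' [Hf' _]]. exists f'. split; auto.
  intros n. destruct (Hf (S n)) as [f'' [Hf'' Hn]].
  apply (derivable_I_n_ext n f''); auto.
  intros x Hx. eapply is_derive_I_unique; eauto.
Qed.

Lemma smooth_I_derivable (f : R -> R) : (forall n, derivable_I_n n f) -> smooth_I f.
Proof.
  intros Hf.
  destruct (choice (fun x y : {g | forall n, derivable_I_n n g} =>
              forall t, inI t -> is_derive_I (proj1_sig x) t (proj1_sig y t)))
    as [next Hnext].
  { intros [g Hg]. destruct (derivable_I_derivative g Hg) as [g' [Hd Hg']].
    exists (exist _ g' Hg'). exact Hd. }
  exists (fun n => proj1_sig (Nat.iter n next (exist _ f Hf))).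
  split; [reflexivity |]. intros n t Ht. apply Hnext, Ht.
Qed.

Lemma smooth_I_ext (f g : R -> R) :
  (forall x, inI x -> f x = g x) -> smooth_I f -> smooth_I g.
Proof.
  intros Hfg Hf. apply smooth_I_derivable. intros n.
  apply (derivable_I_n_ext n f); auto. apply derivable_I_n_smooth, Hf.
Qed.

Lemma smooth_I_const (c : R) : smooth_I (fun _ => c).
Proof. apply smooth_I_derivable. intros n; apply derivable_I_n_const. Qed.

Lemma smooth_I_inv : smooth_I (fun x => / x).
Proof. apply smooth_I_derivable. intros n; apply derivable_I_n_inv. Qed.

Lemma smooth_I_plus (f g : R -> R) :
  smooth_I f -> smooth_I g -> smooth_I (fun x => f x + g x).
Proof.
  intros Hf Hg. apply smooth_I_derivable. intros n.
  apply derivable_I_n_plus; apply derivable_I_n_smooth; assumption.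
Qed.

Lemma smooth_I_mult (f g : R -> R) :
  smooth_I f -> smooth_I g -> smooth_I (fun x => f x * g x).
Proof.
  intros Hf Hg. apply smooth_I_derivable. intros n.
  apply derivable_I_n_mult; apply derivable_I_n_smooth; assumption.
Qed.

Lemma smooth_I_opp (f : R -> R) : smooth_I f -> smooth_I (fun x => - f x).
Proof.
  intros Hf. apply (smooth_I_ext (fun x => -1 * f x)); [intros; ring |].
  apply smooth_I_mult; [apply smooth_I_const | exact Hf].
Qed.

Lemma smooth_I_comp (d : nat -> R -> R) (f : R -> R) :
  (forall k x, is_derive (d k) x (d (S k) x)) ->
  smooth_I f -> smooth_I (fun x => d O (f x)).
Proof.
  intros Hd Hf. apply smooth_I_derivable. intros n.
  apply derivable_I_n_comp; [exact Hd | apply derivable_I_n_smooth, Hf].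
Qed.

Lemma is_derive_I_C (F : R -> C) t (l : C) :
  is_derive_I (V := C_R_NormedModule) F t l <->
  is_derive_I (fun x => fst (F x)) t (fst l) /\ is_derive_I (fun x => snd (F x)) t (snd l).
Proof.
  unfold is_derive_I. fold (within_I t).
  split.
  - intros H. assert (Heps := proj1 (filterlim_locally _ _) H).
    split; apply filterlim_locally; intros eps;
      eapply filter_imp; try apply (Heps eps); intros h Hh; apply Hh.
  - intros [H1 H2]. apply filterlim_locally. intros eps.
    assert (Heps1 := proj1 (filterlim_locally _ _) H1 eps).
    assert (Heps2 := proj1 (filterlim_locally _ _) H2 eps).
    eapply filter_imp; [|exact (filter_and _ _ Heps1 Heps2)]. intros h Hh. exact Hh.
Qed.

Lemma smooth_I_C (F : R -> C) :
  smooth_I (V := C_R_NormedModule) F <->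
  smooth_I (fun x => fst (F x)) /\ smooth_I (fun x => snd (F x)).
Proof.
  split.
  - intros [d [Hd0 Hd]]. split.
    + exists (fun n t => fst (d n t)). split.
      * intros t Ht. rewrite Hd0; auto.
      * intros n t Ht. apply (proj1 (is_derive_I_C _ _ _) (Hd n t Ht)).
    + exists (fun n t => snd (d n t)). split.
      * intros t Ht. rewrite Hd0; auto.
      * intros n t Ht. apply (proj1 (is_derive_I_C _ _ _) (Hd n t Ht)).
  - intros [[d1 [H10 H1]] [d2 [H20 H2]]].
    exists (fun n t => (d1 n t, d2 n t)). split.
    + intros t Ht. rewrite H10, H20 by exact Ht. destruct (F t); reflexivity.
    + intros n t Ht. apply is_derive_I_C. split; [apply H1 | apply H2]; exact Ht.
Qed.

Lemma smooth_I_RtoC (f : R -> R) :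
  smooth_I f -> smooth_I (V := C_R_NormedModule) (fun x => RtoC (f x)).
Proof. intros Hf. apply smooth_I_C. split; [exact Hf | exact (smooth_I_const 0)]. Qed.

Lemma smooth_I_Cconj (F : R -> C) :
  smooth_I (V := C_R_NormedModule) F ->
  smooth_I (V := C_R_NormedModule) (fun x => Cconj (F x)).
Proof.
  intros [HF1 HF2]%smooth_I_C. apply smooth_I_C. split; [exact HF1 | apply smooth_I_opp, HF2].
Qed.

Lemma smooth_I_Cplus (F G : R -> C) :
  smooth_I (V := C_R_NormedModule) F -> smooth_I (V := C_R_NormedModule) G ->
  smooth_I (V := C_R_NormedModule) (fun x => Cplus (F x) (G x)).
Proof.
  intros [HF1 HF2]%smooth_I_C [HG1 HG2]%smooth_I_C.
  apply smooth_I_C. split; apply smooth_I_plus; assumption.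
Qed.

Lemma smooth_I_Cmult (F G : R -> C) :
  smooth_I (V := C_R_NormedModule) F -> smooth_I (V := C_R_NormedModule) G ->
  smooth_I (V := C_R_NormedModule) (fun x => Cmult (F x) (G x)).
Proof.
  intros [HF1 HF2]%smooth_I_C [HG1 HG2]%smooth_I_C.
  apply smooth_I_C. split.
  - apply smooth_I_plus; [apply smooth_I_mult; assumption |].
    apply smooth_I_opp, smooth_I_mult; assumption.
  - apply smooth_I_plus; apply smooth_I_mult; assumption.
Qed.

(** * The entire function (1 - exp (-z)) / z *)

Definition phi_coef (n : nat) : R := (-1) ^ n / INR (fact (S n)).

Definition phi (z : R) : R := PSeries phi_coef z.

Lemma CV_radius_phi_coef : CV_radius phi_coef = p_infty.
Proof.
  apply CV_radius_infinite_DAlembert.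
  - intros n. unfold phi_coef. apply Rmult_integral_contrapositive_currified.
    + apply pow_nonzero; lra.
    + apply Rinv_neq_0_compat, INR_fact_neq_0.
  - apply (is_lim_seq_ext (fun n => / INR (S (S n)))).
    + intros n. unfold phi_coef. rewrite (fact_simpl (S n)), mult_INR. simpl pow.
      assert (H1 := INR_fact_neq_0 (S n)).
      assert (H2 : INR (S (S n)) <> 0) by (apply not_0_INR; lia).
      assert (H3 : (-1) ^ n <> 0) by (apply pow_nonzero; lra).
      replace (-1 * (-1) ^ n / (INR (S (S n)) * INR (fact (S n))) / ((-1) ^ n / INR (fact (S n))))
        with (- / INR (S (S n))) by (field; auto).
      rewrite Rabs_Ropp, Rabs_right; [reflexivity |].
      apply Rle_ge, Rlt_le, Rinv_0_lt_compat, lt_0_INR; lia.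
    + replace (Finite 0) with (Rbar_inv p_infty) by reflexivity.
      apply is_lim_seq_inv; [|discriminate].
      apply (is_lim_seq_ext (fun n => INR (n + 2))).
      * intros n. f_equal. lia.
      * apply (is_lim_seq_incr_n INR 2), is_lim_seq_INR.
Qed.

Lemma phi_derive_n (k : nat) x :
  is_derive (PSeries (Nat.iter k PS_derive phi_coef)) x
    (PSeries (Nat.iter (S k) PS_derive phi_coef) x).
Proof.
  apply is_derive_PSeries.
  assert (Hradius : CV_radius (Nat.iter k PS_derive phi_coef) = p_infty).
  { induction k as [|k IH]; simpl; [apply CV_radius_phi_coef |].
    rewrite CV_radius_derive; exact IH. }
  rewrite Hradius. exact I.
Qed.

Lemma phi_spec z : 1 - z * phi z = exp (- z).
Proof.
  assert (Hexp := is_exp_Reals (- z)). unfold is_pseries in Hexp.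
  assert (Hexp1 : is_series (fun k => scal (pow_n (- z) (S k)) (/ INR (fact (S k))))
                            (exp (- z) - 1)).
  { apply (is_series_incr_1 (fun k => scal (pow_n (- z) k) (/ INR (fact k)))).
    replace (plus (exp (- z) - 1) _) with (exp (- z)); [exact Hexp |].
    unfold plus, scal, one; simpl; unfold mult, one; simpl. field. }
  assert (Hphi : is_series (fun k => scal (pow_n z k) (phi_coef k)) (phi z)).
  { apply PSeries_correct, CV_radius_inside. rewrite CV_radius_phi_coef. exact I. }
  apply (is_series_scal (- z)) in Hphi.
  apply (is_series_ext _ (fun k => scal (pow_n (- z) (S k)) (/ INR (fact (S k))))) in Hphi.
  - apply is_series_unique in Hexp1. apply is_series_unique in Hphi.
    rewrite Hexp1 in Hphi. unfold scal in Hphi; simpl in Hphi; unfold mult in Hphi; simpl in Hphi.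
    lra.
  - intros n. unfold scal; simpl; unfold mult; simpl.
    rewrite (pow_n_pow z), (pow_n_pow (- z)). unfold phi_coef.
    replace ((- z) ^ n) with ((-1) ^ n * z ^ n)
      by (rewrite <- Rpow_mult_distr; f_equal; ring).
    change (fact n + n * fact n)%nat with (fact (S n)).
    field. apply INR_fact_neq_0.
Qed.

Lemma phi_bounds z : 0 <= z -> 0 <= phi z <= 1.
Proof.
  intros Hz. destruct (Req_dec z 0) as [-> | Hz0].
  - unfold phi. rewrite PSeries_0. unfold phi_coef. simpl. lra.
  - assert (Hspec := phi_spec z).
    assert (Hlow := exp_ineq1_le (- z)).
    assert (Hup : exp (- z) <= 1) by (rewrite <- exp_0; apply Rlt_le, exp_increasing; lra).
    split; apply (Rmult_le_reg_l z); lra.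
Qed.

Lemma smooth_I_phi (f : R -> R) : smooth_I f -> smooth_I (fun x => phi (f x)).
Proof.
  apply (smooth_I_comp (fun k => PSeries (Nat.iter k PS_derive phi_coef))).
  exact phi_derive_n.
Qed.

(* [q] stands for the squared modulus |a|^2 of a representative. *)
Definition weight (q eps : R) : R := - (phi (q / eps) / eps).

Lemma one_plus_mult_weight q eps : 1 + q * weight q eps = exp (- (q / eps)).
Proof.
  rewrite <- phi_spec. unfold weight, Rdiv. ring.
Qed.

Lemma weight_bound q eps : 0 <= q -> 0 < eps -> Rabs (weight q eps) <= / eps.
Proof.
  intros Hq Heps.
  assert (Hinv : 0 < / eps) by (apply Rinv_0_lt_compat, Heps).
  assert (Hphi := phi_bounds (q / eps) (Rmult_le_pos _ _ Hq (Rlt_le _ _ Hinv))).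
  unfold weight, Rdiv. rewrite Rabs_Ropp, Rabs_right by nra. nra.
Qed.

Lemma smooth_I_weight (q : R -> R) : smooth_I q -> smooth_I (fun e => weight (q e) e).
Proof.
  intros Hq. apply smooth_I_opp, smooth_I_mult; [|apply smooth_I_inv].
  apply smooth_I_phi, smooth_I_mult; [exact Hq | apply smooth_I_inv].
Qed.

Lemma moderate_mult_weight_bound (N : nat) c e x w :
  0 < e -> x <= c * / e ^ N -> 0 <= x -> Rabs w <= / e -> x * Rabs w <= c * / e ^ S N.
Proof.
  intros He Hx Hx0 Hw.
  assert (HeN : 0 < e ^ N) by (apply pow_lt, He).
  replace (c * / e ^ S N) with (c * / e ^ N * / e) by (simpl; field; lra).
  apply Rle_trans with (x * / e); [apply Rmult_le_compat_l; assumption |].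
  apply Rmult_le_compat_r; [apply Rlt_le, Rinv_0_lt_compat |]; assumption.
Qed.

Lemma exp_neg_le_fact_div_pow m y : 0 < y -> exp (- y) <= INR (fact m) / y ^ m.
Proof.
  intros Hy.
  assert (Hfact : 0 < INR (fact m)) by apply INR_fact_lt_0.
  assert (Hpow : 0 < y ^ m) by (apply pow_lt, Hy).
  assert (Htaylor : y ^ m / INR (fact m) <= exp y).
  { eapply Rle_trans; [|apply (exp_ge_taylor y m (Rlt_le _ _ Hy))].
    destruct m as [|m]; [simpl; lra |]. rewrite tech5. cbv beta.
    assert (0 <= sum_f_R0 (fun k => y ^ k / INR (fact k)) m); [|lra].
    apply cond_pos_sum. intros k. apply Rmult_le_pos; [apply pow_le; lra |].
    apply Rlt_le, Rinv_0_lt_compat, INR_fact_lt_0. }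
  rewrite exp_Ropp. assert (Hexp := exp_pos y).
  apply (Rmult_le_reg_l (exp y * (y ^ m / INR (fact m)))).
  { apply Rmult_lt_0_compat; [lra | apply Rdiv_lt_0_compat; assumption]. }
  replace (exp y * (y ^ m / INR (fact m)) * / exp y) with (y ^ m / INR (fact m)) by (field; lra).
  replace (exp y * (y ^ m / INR (fact m)) * (INR (fact m) / y ^ m)) with (exp y) by (field; lra).
  exact Htaylor.
Qed.

Lemma exp_neg_div_rapid_decay (A : R -> R) d e0 :
  0 < d -> 0 < e0 -> (forall e, 0 < e <= e0 -> d <= A e) ->
  forall m : nat, exists c e1, 0 < e1 /\
    forall e, 0 < e <= e1 -> Rabs (exp (- (A e / e))) <= c * e ^ m.
Proof.
  intros Hd He0 HA m. exists (INR (fact m) / d ^ m), e0. split; [exact He0 |].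
  intros e He. rewrite Rabs_right by (apply Rle_ge, Rlt_le, exp_pos).
  assert (Hde : d / e <= A e / e).
  { apply Rmult_le_compat_r; [apply Rlt_le, Rinv_0_lt_compat; lra | apply HA, He]. }
  apply Rle_trans with (exp (- (d / e))).
  { destruct Hde as [Hlt | Heq]; [apply Rlt_le, exp_increasing; lra | rewrite Heq; lra]. }
  eapply Rle_trans; [apply (exp_neg_le_fact_div_pow m), Rdiv_lt_0_compat; lra |].
  right. unfold Rdiv. rewrite Rpow_mult_distr, pow_inv. field.
  split; apply pow_nonzero; lra.
Qed.

Lemma eventually_half (u : R -> R) c e0 : 0 < e0 ->
  (forall e, 0 < e <= e0 -> Rabs (u e) <= c * e ^ 1) ->
  exists e1, 0 < e1 /\ forall e, 0 < e <= e1 -> Rabs (u e) <= 1 / 2.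
Proof.
  intros He0 Hu.
  set (k := Rabs c + 1). assert (Hk : 0 < k) by (unfold k; generalize (Rabs_pos c); lra).
  exists (Rmin e0 (/ (2 * k))). split.
  - apply Rmin_pos; [exact He0 | apply Rinv_0_lt_compat; lra].
  - intros e [He He1].
    assert (Hle0 := Rle_trans _ _ _ He1 (Rmin_l e0 (/ (2 * k)))).
    assert (Hlek := Rle_trans _ _ _ He1 (Rmin_r e0 (/ (2 * k)))).
    eapply Rle_trans; [apply Hu; lra |]. rewrite pow_1.
    assert (Hc : c * e <= k * e) by (apply Rmult_le_compat_r; [lra | unfold k; generalize (Rle_abs c); lra]).
    assert (Hek : e * (2 * k) <= 1).
    { apply (Rmult_le_reg_r (/ (2 * k))); [apply Rinv_0_lt_compat; lra |].
      rewrite Rmult_assoc, Rinv_r, Rmult_1_r, Rmult_1_l by lra. exact Hlek. }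
    nra.
Qed.

Lemma sum_squares_ge (x y : R) : Rabs (x + y - 1) <= 1 / 2 -> 1 / 8 <= x * x + y * y.
Proof.
  intros Hxy. apply Rabs_le_between in Hxy.
  assert (0 <= (x - y) * (x - y)) by apply Rle_0_sqr.
  assert (0 <= (x + y - 1 / 2) * (x + y - 1 / 2)) by apply Rle_0_sqr.
  lra.
Qed.

Lemma one_plus_mult_weight_prod q1 q2 e :
  (1 + q1 * weight q1 e) * (1 + q2 * weight q2 e) = exp (- ((q1 + q2) / e)).
Proof.
  rewrite !one_plus_mult_weight, <- exp_plus. f_equal. unfold Rdiv. ring.
Qed.

Lemma rapid_decay_near_one (x y A : R -> R) c e0 : 0 < e0 ->
  (forall e, 0 < e <= e0 -> Rabs (x e + y e - 1) <= c * e ^ 1) ->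
  (forall e, x e * x e + y e * y e <= A e) ->
  forall m : nat, exists c' e1, 0 < e1 /\
    forall e, 0 < e <= e1 -> Rabs (exp (- (A e / e))) <= c' * e ^ m.
Proof.
  intros He0 Hxy HA.
  destruct (eventually_half _ c e0 He0 Hxy) as [e1 [He1 Hhalf]].
  apply (exp_neg_div_rapid_decay A (1 / 8) e1); [lra | exact He1 |].
  intros e He. eapply Rle_trans; [apply sum_squares_ge, Hhalf, He | apply HA].
Qed.

Lemma moderate_sm_mult_weight_R (u : R -> R) :
  moderate_sm u -> moderate_sm (fun e => u e * weight (u e * u e) e).
Proof.
  intros [Su [N [c [e0 [He0 Bu]]]]]. split.
  - apply smooth_I_mult; [exact Su |]. apply smooth_I_weight, smooth_I_mult; exact Su.
  - exists (S N), c, e0. split; [exact He0 |]. intros e He.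
    change (Rabs (u e * weight (u e * u e) e) <= c * / e ^ S N). rewrite Rabs_mult.
    apply moderate_mult_weight_bound; [lra | apply Bu, He | apply Rabs_pos |].
    apply weight_bound; [apply Rle_0_sqr | lra].
Qed.

Lemma gelfand_R : @gelfand_sm R_NormedModule Rplus Rmult 1.
Proof.
  intros a b Ha Hb [_ Hab].
  assert (Hr := moderate_sm_mult_weight_R a Ha).
  assert (Hs := moderate_sm_mult_weight_R b Hb).
  exists (fun e => a e * weight (a e * a e) e), (fun e => b e * weight (b e * b e) e).
  split; [exact Hr |]. split; [exact Hs |]. split.
  - destruct Ha as [Sa _], Hb as [Sb _], Hr as [Sr _], Hs as [Ss _].
    apply smooth_I_mult; apply smooth_I_plus; try apply smooth_I_const;
      apply smooth_I_mult; assumption.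
  - intros m. destruct (Hab 1%nat) as [c1 [e1 [He1 B1]]].
    destruct (rapid_decay_near_one a b (fun e => a e * a e + b e * b e) c1 e1 He1 B1
                (fun e => Rle_refl _) m) as [c [e2 [He2 B2]]].
    exists c, e2. split; [exact He2 |]. intros e He.
    change (Rabs ((1 + a e * (a e * weight (a e * a e) e)) *
                  (1 + b e * (b e * weight (b e * b e) e))) <= c * e ^ m).
    assert (Hprod := one_plus_mult_weight_prod (a e * a e) (b e * b e) e).
    rewrite !(Rmult_assoc (_ e)) in Hprod. rewrite Hprod. apply B2, He.
Qed.

Definition Cnorm2 (z : C) : R := fst z * fst z + snd z * snd z.

Lemma Cnorm2_nonneg z : 0 <= Cnorm2 z.
Proof. apply Rplus_le_le_0_compat; apply Rle_0_sqr. Qed.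

Lemma one_plus_mult_conj_weight (z : C) w :
  Cplus (RtoC 1) (Cmult z (Cmult (Cconj z) (RtoC w))) = RtoC (1 + Cnorm2 z * w).
Proof. unfold Cplus, Cmult, Cconj, RtoC, Cnorm2; simpl. f_equal; ring. Qed.

Lemma moderate_sm_mult_weight_C (u : R -> C) :
  moderate_sm (V := C_R_NormedModule) u ->
  moderate_sm (V := C_R_NormedModule)
    (fun e => Cmult (Cconj (u e)) (RtoC (weight (Cnorm2 (u e)) e))).
Proof.
  intros [Su [N [c [e0 [He0 Bu]]]]]. split.
  - apply smooth_I_Cmult; [apply smooth_I_Cconj, Su |].
    apply smooth_I_RtoC, smooth_I_weight. apply smooth_I_C in Su as [Su1 Su2].
    apply smooth_I_plus; apply smooth_I_mult; assumption.
  - exists (S N), c, e0. split; [exact He0 |]. intros e He.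
    specialize (Bu e He). rewrite <- Cmod_norm in Bu |- *.
    rewrite Cmod_mult, Cmod_conj, Cmod_R.
    apply moderate_mult_weight_bound; [lra | exact Bu | apply Cmod_ge_0 |].
    apply weight_bound; [apply Cnorm2_nonneg | lra].
Qed.

Lemma gelfand_C : @gelfand_sm C_R_NormedModule Cplus Cmult (RtoC 1).
Proof.
  intros a b Ha Hb [_ Hab].
  assert (Hr := moderate_sm_mult_weight_C a Ha).
  assert (Hs := moderate_sm_mult_weight_C b Hb).
  exists (fun e => Cmult (Cconj (a e)) (RtoC (weight (Cnorm2 (a e)) e))),
         (fun e => Cmult (Cconj (b e)) (RtoC (weight (Cnorm2 (b e)) e))).
  split; [exact Hr |]. split; [exact Hs |]. split.
  - destruct Ha as [Sa _], Hb as [Sb _], Hr as [Sr _], Hs as [Ss _].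
    apply smooth_I_Cmult; apply smooth_I_Cplus; try apply smooth_I_RtoC, smooth_I_const;
      apply smooth_I_Cmult; assumption.
  - intros m. destruct (Hab 1%nat) as [c1 [e1 [He1 B1]]].
    destruct (rapid_decay_near_one (fun e => fst (a e)) (fun e => fst (b e))
                (fun e => Cnorm2 (a e) + Cnorm2 (b e)) c1 e1 He1) with (m := m)
      as [c [e2 [He2 B2]]].
    { intros e He. eapply Rle_trans; [|apply B1, He]. rewrite <- Cmod_norm.
      eapply Rle_trans; [|apply Rmax_Cmod]. apply Rmax_l. }
    { intros e. unfold Cnorm2.
      assert (0 <= snd (a e) * snd (a e)) by apply Rle_0_sqr.
      assert (0 <= snd (b e) * snd (b e)) by apply Rle_0_sqr. lra. }
    exists c, e2. split; [exact He2 |]. intros e He.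
    rewrite <- Cmod_norm, !one_plus_mult_conj_weight.
    rewrite <- RtoC_mult, one_plus_mult_weight_prod, Cmod_R. apply B2, He.
Qed.

Theorem lemma4p5 :
  @gelfand_sm R_NormedModule Rplus Rmult 1%R /\
  @gelfand_sm C_R_NormedModule Cplus Cmult (RtoC 1%R).
Proof. split; [exact gelfand_R | exact gelfand_C]. Qed.
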